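(* For $1\le j\le m$ and $a,b\in(\mathbb{Z}_n)^m$, put $\Gamma^j_{\chi_a}:=\chi_a\cdot\Gamma^j$. Then in $M_q(\mathfrak{g})$: - $\Delta(\Gamma^j_{\chi_a})=\chi_{a+\epsilon_j}\otimes\Gamma^j_{\chi_a}+\Gamma^j_{\chi_a}\otimes\chi_a$; - $\chi_a\cdot\Gamma^j_{\chi_b}=\prod_{i=1}^m\mathfrak{q}^{-c_{ij}a_i\lfloor\frac{b_j+1}{n}\rfloor}\Gamma^j_{\chi_{a+b}}$; - $\Gamma^j_{\chi_b}\cdot\chi_a=\prod_{i=1}^mq^{c_{ji}a_i}\Gamma^j_{\chi_{a+b}}$. Here $a+b$ is taken in $(\mathbb{Z}_n)^m$.
   Context: Notation and setting. $\mathbb{k}$ is an algebraically closed field of characteristic $0$. $(a_{ij})$ is an $m\times m$ Cartan matrix of finite type, and $d_i\in\{1,2,3\}$ are such that $c_{ij}=d_ia_{ij}$ is symmetric. $n\ge2$, $q$ is a primitive $n^2$-th root of unity in $\mathbb{k}$, $\mathfrak{q}=q^n$, and $l_i=\mathrm{ord}(q^{c_{ii}})$. $\lfloor\cdot\rfloor$ is the floor function, and elements of $(\mathbb{Z}_n)^m$ have entries in $\{0,\dots,n-1\}$; $\epsilon_j$ is the $j$-th standard vector. $A_q(\mathfrak{g})$ is the half small quasi-quantum group: the subalgebra generated by $h_i=g_i^n$ and $e_i$ of the Hopf algebra $H$ generated by commuting grouplikes $g_i$ ($g_i^{n^2}=1$) and $e_i$ with $g_ie_jg_i^{-1}=q^{\delta_{ij}}e_j$,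 $e_i^{l_i}=0$, the quantum Serre relations, and $\Delta(e_i)=e_i\otimes\prod_jg_j^{c_{ij}}+1\otimes e_i$, with quasi-Hopf structure inherited from a twist of $H$. Let $1_a$ be the idempotents of $\mathbb{k}\langle h_i\rangle$ with $1_ah_i=\mathfrak{q}^{a_i}1_a$, $1^i_k=\frac1n\sum_j\mathfrak{q}^{-kj}h_i^j$, $b_i=\sum_a\prod_jq^{-c_{ij}a_j}1_a$, and $H_i=\prod_jh_j^{c_{ij}}$. Its structure is: - $\Delta(h_i)=h_i\otimes h_i$; - $\Delta(e_i)=e_i\otimes b_i^{-1}+1\otimes\sum_{j=1}^{n-1}1^i_je_i+H_i^{-1}\otimes1^i_0e_i$; - $\phi=\sum_{a,b,c}\prod_{i,j}\mathfrak{q}^{-c_{ij}a_i\lfloor\frac{b_j+c_j}{n}\rfloor}1_a\otimes1_b\otimes1_c$. $M_q(\mathfrak{g})=A_q(\mathfrak{g})^*$ is the dual Majid algebra: - its coproduct is dual to the product of $A_q(\mathfrak{g})$; - its product is $(f\cdot g)(x)=\sum f(x_{(1)})g(x_{(2)})$; - its reassociator is $\Phi=\phi$ viewed as a functional, so $\Phi(\chi_a,\chi_b,\chi_c)=\prod_{s,t}\mathfrak{q}^{-c_{st}a_s\lfloor\frac{b_t+c_t}{n}\rfloor}$. $\chi_a$ ($a\in(\mathbb{Z}_n)^m$) is the algebra character of $A_q(\mathfrak{g})$ with $\chi_a(h_j)=\mathfrak{q}^{a_j}$ and $\chi_a(e_j)=0$; these are the grouplikes of $M_q(\mathfrak{g})$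 and $\chi_a\chi_b=\chi_{a+b}$; set $\chi_i=\chi_{\epsilon_i}$. Fix a homogeneous basis of $A_q(\mathfrak{g})$ ($\deg h_i=0$, $\deg e_i=1$) containing all $1_a$ and $1_ae_i$, and let $\Gamma^i=(1_{\epsilon_i}e_i)^*$ be the corresponding dual basis element. *)

(* Model of the half small quasi-quantum group A_q(g) and of
   its dual Majid algebra M_q(g) = A_q(g)^*. *)
From HB Require Import structures.
From mathcomp Require Import all_boot all_order all_algebra.
Set Implicit Arguments.
Unset Strict Implicit.
Unset Printing Implicit Defensive.
Import GRing.Theory.
Local Open Scope ring_scope.

Definition cmat (m : nat) (Ca : 'I_m -> 'I_m -> int) (d : 'I_m -> nat)
  (i j : 'I_m) : int := (d i)%:Z * Ca i j.

Definition finite_cartan (m : nat) (Ca : 'I_m -> 'I_m -> int) (d : 'I_m -> nat) : Prop :=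
  [/\ forall i, Ca i i = 2,
      forall i j, i != j -> Ca i j <= 0,
      forall i, d i \in [:: 1; 2; 3]%N,
      forall i j, cmat Ca d i j = cmat Ca d j i &
      forall v : 'I_m -> int, (exists i, v i != 0) ->
        0 < \sum_(i < m) \sum_(j < m) v i * cmat Ca d i j * v j].

Fixpoint gbin (R : nzRingType) (v : R) (N r : nat) : R :=
  match N, r with
  | _, 0%N => 1
  | 0%N, _.+1 => 0
  | N'.+1, r'.+1 => gbin v N' r' + v ^+ r'.+1 * gbin v N' r'.+1
  end.

Definition qbin (F : unitRingType) (v : F) (N r : nat) : F :=
  v ^- (r * (N - r)) * gbin (v ^+ 2) N r.

Definition eps (m n : nat) (j : 'I_m) : {ffun 'I_m -> 'Z_n} :=
  [ffun i => (i == j)%:R].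

Section Alg.
Variables (k : fieldType) (m n : nat) (Ca : 'I_m -> 'I_m -> int)
  (d : 'I_m -> nat) (q : k) (l : 'I_m -> nat).

(* Defining relations of A_q(g) for elements h_i, e_i of a k-algebra B
   (frak q = q^n):  h_i commute, h_i^n = 1, h_i e_j h_i^{-1} = frak q^{delta_ij} e_j,
   e_i^{l_i} = 0, quantum Serre relations with q_i = q^{d_i}. *)
Definition qqg_rel (B : algType k) (h e : 'I_m -> B) : Prop :=
  [/\ forall i j, h i * h j = h j * h i,
      forall i, h i ^+ n = 1,
      forall i j, h i * e j = ((q ^+ n) ^+ (i == j)) *: (e j * h i),
      forall i, e i ^+ l i = 0 &
      forall i j, i != j ->
        \sum_(r < (absz (1 - Ca i j)).+1)
          ((-1) ^+ r * qbin (q ^+ d i) (absz (1 - Ca i j)) r) *: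
            (e i ^+ (absz (1 - Ca i j) - r) * e j * e i ^+ r) = 0].

Inductive gen (A : algType k) (h e : 'I_m -> A) : A -> Prop :=
  | gen1 : gen h e 1
  | genH i : gen h e (h i)
  | genE i : gen h e (e i)
  | genD x y : gen h e x -> gen h e y -> gen h e (x + y)
  | genM x y : gen h e x -> gen h e y -> gen h e (x * y)
  | genZ (c : k) x : gen h e x -> gen h e (c *: x).

Definition qqg_univ (A : algType k) (h e : 'I_m -> A) : Prop :=
  forall (B : algType k) (h' e' : 'I_m -> B), qqg_rel h' e' ->
    exists f : A -> B,
      [/\ forall (c : k) x y, f (c *: x + y) = c *: f x + f y,
          f 1 = 1,
          forall x y, f (x * y) = f x * f y,
          forall i, f (h i) = h' i &
          forall i, f (e i) = e' i].

Definition is_Aq (A : algType k) (h e : 'I_m -> A) : Prop :=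
  [/\ qqg_rel h e, forall x, gen h e x & qqg_univ h e].

Variables (A : algType k) (h e : 'I_m -> A).

Inductive mono : nat -> A -> Prop :=
  | mono1 : mono 0 1
  | monoH i dg x : mono dg x -> mono dg (h i * x)
  | monoE i dg x : mono dg x -> mono dg.+1 (e i * x).

Inductive homog (dg : nat) : A -> Prop :=
  | homog0 : homog dg 0
  | homogM x : mono dg x -> homog dg x
  | homogD (c : k) x y : homog dg x -> homog dg y -> homog dg (c *: x + y).

Definition onei (i : 'I_m) (c : nat) : A :=
  (n%:R : k)^-1 *: \sum_(j < n) ((q ^+ n) ^- (c * j)) *: h i ^+ j.

Definition idem (a : {ffun 'I_m -> 'Z_n}) : A := \prod_(i < m) onei i (a i).

Definition binv (i : 'I_m) : A :=
  \sum_(a : {ffun 'I_m -> 'Z_n})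
     (\prod_(j < m) q ^ (cmat Ca d i j * (a j : nat)%:Z)) *: idem a.

(* H_i^{-1} = prod_j h_j^{-c_ij}  (h_j^n = 1) *)
Definition Hinv (i : 'I_m) : A :=
  \prod_(j < m) h j ^+ (absz ((- cmat Ca d i j) %% n)%Z).

(* ---------- tensors A (x) A as finite formal sums ---------- *)
Definition lfun (f : A -> k) : Prop :=
  forall (c : k) x y, f (c *: x + y) = c * f x + f y.

Definition pair_eval (f g : A -> k) (T : seq (A * A)) : k :=
  \sum_(p <- T) f p.1 * g p.2.

(* equality in A (x) A *)
Definition teq (T T' : seq (A * A)) : Prop :=
  forall f g, lfun f -> lfun g -> pair_eval f g T = pair_eval f g T'.

Definition tmul (T T' : seq (A * A)) : seq (A * A) :=
  [seq (p.1 * p'.1, p.2 * p'.2) | p <- T, p' <- T'].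

Definition tscale (c : k) (T : seq (A * A)) : seq (A * A) :=
  [seq (c *: p.1, p.2) | p <- T].

Definition is_coprod (Delta : A -> seq (A * A)) : Prop :=
  [/\ forall (c : k) x y, teq (Delta (c *: x + y)) (tscale c (Delta x) ++ Delta y),
      teq (Delta 1) [:: (1, 1)],
      forall x y, teq (Delta (x * y)) (tmul (Delta x) (Delta y)),
      forall i, teq (Delta (h i)) [:: (h i, h i)] &
      forall i, teq (Delta (e i))
        ([:: (e i, binv i)] ++
         [seq (1, onei i j * e i) | j <- iota 1 n.-1] ++
         [:: (Hinv i, onei i 0 * e i)])].

(* product of M_q(g) = A_q(g)^*:  (f.g)(x) = sum f(x_(1)) g(x_(2)) *)
Definition mmul (Delta : A -> seq (A * A)) (f g : A -> k) : A -> k :=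
  fun x => pair_eval f g (Delta x).

Definition is_chi (chi : {ffun 'I_m -> 'Z_n} -> A -> k) : Prop :=
  forall a, [/\ lfun (chi a), chi a 1 = 1,
                forall x y, chi a (x * y) = chi a x * chi a y,
                forall j, chi a (h j) = (q ^+ n) ^+ (a j : nat) &
                forall j, chi a (e j) = 0].

(* Gamma^j = (1_{eps_j} e_j)^* for a homogeneous basis containing all
   1_a and 1_a e_i *)
Definition is_Gamma (Gam : 'I_m -> A -> k) : Prop :=
  forall j, [/\ lfun (Gam j),
                forall a i, Gam j (idem a * e i) = ((a == eps n j) && (i == j))%:R &
                forall dg x, homog dg x -> dg != 1%N -> Gam j x = 0].

End Alg.

(* Write [z = q^n], a primitive [n]-th root of unity.  The characters [chi a]
   are the algebra maps [A -> k], and [Gam j] is a twisted derivation: it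
   vanishes off degree one and the relations [h_i e_j = z^(i == j) e_j h_i]
   give [Gam j (x y) = chi (eps j) x * Gam j y + Gam j x * chi 0 y].  In the
   convolution algebra of functionals, the product of a character with a
   character is a character and the product of a character with a twisted
   derivation (on either side) is again a twisted derivation, with the twists
   multiplied.  Since [A] is generated by the [h_i] and [e_i], characters and
   twisted derivations with fixed twists are determined by their values on the
   generators, so each identity reduces to evaluating both sides at [e_i]; the
   scalars come from [chi b (1^i_c) = (b i == c)], from [chi a (b_i^-1)] and
   from [chi (b + eps j) (H_i^-1)], which is nontrivial only when
   [b_j + 1] wraps around modulo [n]. *)
From HB Require Import structures.
From mathcomp Require Import all_boot all_order all_algebra.
From mathcomp Require Import ring zify.
Import GRing.Theory.
Local Open Scope ring_scope.
Set Implicit Arguments.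
Unset Strict Implicit.

Section LinearFunctionals.
Variables (k : fieldType) (A : algType k).

Lemma lfun0 (f : A -> k) : lfun f -> f 0 = 0.
Proof.
move=> lf; have := lf 1 0 0; rewrite scale1r addr0 mul1r => E.
by apply: (addrI (f 0)); rewrite addr0 -E.
Qed.

Lemma lfunZ (f : A -> k) c x : lfun f -> f (c *: x) = c * f x.
Proof. by move=> lf; have := lf c x 0; rewrite addr0 lfun0 // addr0. Qed.

Lemma lfunD (f : A -> k) x y : lfun f -> f (x + y) = f x + f y.
Proof. by move=> lf; have := lf 1 x y; rewrite scale1r mul1r. Qed.

Lemma lfun_sum (f : A -> k) (I : Type) (r : seq I) (F : I -> A) :
  lfun f -> f (\sum_(i <- r) F i) = \sum_(i <- r) f (F i).
Proof.
move=> lf; elim: r => [|i r IH]; first by rewrite !big_nil lfun0.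
by rewrite !big_cons lfunD // IH.
Qed.

Definition lchar (f : A -> k) : Prop :=
  [/\ lfun f, f 1 = 1 & forall x y, f (x * y) = f x * f y].

Definition twisted_der (c1 c2 g : A -> k) : Prop :=
  lfun g /\ forall x y, g (x * y) = c1 x * g y + g x * c2 y.

Lemma lchar_prod f (I : Type) (r : seq I) (F : I -> A) : lchar f ->
  f (\prod_(i <- r) F i) = \prod_(i <- r) f (F i).
Proof. by case=> _ f1 fM; apply: big_morph. Qed.

Lemma twisted_der_ext c1 c2 c1' c2' g : twisted_der c1 c2 g ->
  c1 =1 c1' -> c2 =1 c2' -> twisted_der c1' c2' g.
Proof. by move=> [lg dg] E1 E2; split => // x y; rewrite dg E1 E2. Qed.

Lemma twisted_derZ c1 c2 g (s : k) : twisted_der c1 c2 g ->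
  twisted_der c1 c2 (fun x => s * g x).
Proof. by move=> [lg dg]; split=> [c x y|x y]; rewrite ?lg ?dg; ring. Qed.

Lemma pair_eval_cat (f g : A -> k) T T' :
  pair_eval f g (T ++ T') = pair_eval f g T + pair_eval f g T'.
Proof. exact: big_cat. Qed.

Lemma pair_eval_tscale (f g : A -> k) c T : lfun f ->
  pair_eval f g (tscale c T) = c * pair_eval f g T.
Proof.
move=> lf; rewrite /pair_eval big_map mulr_sumr.
by apply: eq_bigr => p _; rewrite lfunZ // mulrA.
Qed.

Lemma pair_eval_tmul (f g : A -> k) T T' :
  pair_eval f g (tmul T T') =
  \sum_(p <- T) \sum_(p' <- T') f (p.1 * p'.1) * g (p.2 * p'.2).
Proof. exact: big_allpairs_dep. Qed.

End LinearFunctionals.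

Section Convolution.
Variables (k : fieldType) (A : algType k).
Variables (m n : nat) (Ca : 'I_m -> 'I_m -> int) (d : 'I_m -> nat) (q : k)
  (h e : 'I_m -> A) (Delta : A -> seq (A * A)).
Hypothesis Delta_coprod : is_coprod n Ca d q h e Delta.

Lemma mmul_lfun f g : lfun f -> lfun g -> lfun (mmul Delta f g).
Proof.
move=> lf lg c x y; case: Delta_coprod => [DeltaD _ _ _ _].
by rewrite /mmul (DeltaD c x y f g lf lg) pair_eval_cat pair_eval_tscale.
Qed.

Lemma mmulM f g x y : lfun f -> lfun g ->
  mmul Delta f g (x * y) =
  \sum_(p <- Delta x) \sum_(p' <- Delta y) f (p.1 * p'.1) * g (p.2 * p'.2).
Proof.
move=> lf lg; case: Delta_coprod => [_ _ DeltaM _ _].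
by rewrite /mmul (DeltaM x y f g lf lg) pair_eval_tmul.
Qed.

Lemma mmul1 f g : lfun f -> lfun g -> mmul Delta f g 1 = f 1 * g 1.
Proof.
move=> lf lg; case: Delta_coprod => [_ Delta1 _ _ _].
by rewrite /mmul (Delta1 f g lf lg) /pair_eval big_seq1.
Qed.

Lemma mmul_h f g i : lfun f -> lfun g ->
  mmul Delta f g (h i) = f (h i) * g (h i).
Proof.
move=> lf lg; case: Delta_coprod => [_ _ _ Delta_h _].
by rewrite /mmul (Delta_h i f g lf lg) /pair_eval big_seq1.
Qed.

Lemma mmul_e f g i : lfun f -> lfun g -> mmul Delta f g (e i) =
  f (e i) * g (binv n Ca d q h i)
  + \sum_(c <- iota 1 n.-1) f 1 * g (onei n q h i c * e i)
  + f (Hinv n Ca d h i) * g (onei n q h i 0 * e i).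
Proof.
move=> lf lg; case: Delta_coprod => [_ _ _ _ Delta_e].
by rewrite /mmul (Delta_e i f g lf lg) !pair_eval_cat /pair_eval !big_seq1
  big_map addrA.
Qed.

Lemma mmul_lchar f g : lchar f -> lchar g -> lchar (mmul Delta f g).
Proof.
move=> [lf f1 fM] [lg g1 gM]; split; first exact: mmul_lfun.
  by rewrite mmul1 // f1 g1 mulr1.
move=> x y; rewrite mmulM // /mmul /pair_eval big_distrl /=.
apply: eq_bigr => p _; rewrite big_distrr /=; apply: eq_bigr => p' _.
by rewrite fM gM; ring.
Qed.

Lemma mmul_lchar_der f c1 c2 g : lchar f -> twisted_der c1 c2 g ->
  twisted_der (mmul Delta f c1) (mmul Delta f c2) (mmul Delta f g).
Proof.
move=> [lf f1 fM] [lg gD]; split; first exact: mmul_lfun.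
move=> x y; rewrite mmulM // /mmul /pair_eval !big_distrl -big_split /=.
apply: eq_bigr => p _; rewrite !big_distrr -big_split /=; apply: eq_bigr => p' _.
by rewrite fM gD; ring.
Qed.

Lemma mmul_der_lchar f c1 c2 g : twisted_der c1 c2 f -> lchar g ->
  twisted_der (mmul Delta c1 g) (mmul Delta c2 g) (mmul Delta f g).
Proof.
move=> [lf fD] [lg g1 gM]; split; first exact: mmul_lfun.
move=> x y; rewrite mmulM // /mmul /pair_eval !big_distrl -big_split /=.
apply: eq_bigr => p _; rewrite !big_distrr -big_split /=; apply: eq_bigr => p' _.
by rewrite fD gM; ring.
Qed.

Hypothesis generated : forall x, gen h e x.

Lemma twisted_der_eq c1 c2 g1 g2 :
  twisted_der c1 c2 g1 -> twisted_der c1 c2 g2 -> g1 1 = g2 1 ->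
  (forall i, g1 (h i) = g2 (h i)) -> (forall i, g1 (e i) = g2 (e i)) ->
  g1 =1 g2.
Proof.
move=> [l1 D1] [l2 D2] E1 Eh Ee x; elim: (generated x) => //.
- by move=> x' y' _ I1 _ I2; rewrite !lfunD // I1 I2.
- by move=> x' y' _ I1 _ I2; rewrite D1 D2 I1 I2.
- by move=> c x' _ I; rewrite !lfunZ // I.
Qed.

Lemma lchar_eq g1 g2 : lchar g1 -> lchar g2 ->
  (forall i, g1 (h i) = g2 (h i)) -> (forall i, g1 (e i) = g2 (e i)) ->
  g1 =1 g2.
Proof.
move=> [l1 o1 M1] [l2 o2 M2] Eh Ee x; elim: (generated x) => //.
- by rewrite o1 o2.
- by move=> x' y' _ I1 _ I2; rewrite !lfunD // I1 I2.
- by move=> x' y' _ I1 _ I2; rewrite M1 M2 I1 I2.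
- by move=> c x' _ I; rewrite !lfunZ // I.
Qed.

End Convolution.

Section RootsOfUnity.
Variables (k : fieldType) (n : nat) (z : k).
Hypotheses (n_gt0 : (0 < n)%N) (z_prim : n.-primitive_root z).

Lemma prim_root_neq0 : z != 0.
Proof.
apply/eqP => z0; have := prim_expr_order z_prim.
by rewrite z0 expr0n eqn0Ngt n_gt0 => /esym/eqP; rewrite oner_eq0.
Qed.

Lemma sum_prim_root_powV t : (0 < t < n)%N ->
  \sum_(c < n) (z ^+ (c * t))^-1 = 0.
Proof.
move=> /andP[t_gt0 t_ltn]; set w := (z ^+ t)^-1.
under eq_bigr do rewrite mulnC exprM -exprVn -/w.
have w_neq1 : w != 1.
  rewrite invr_eq1 -(expr0 z) (eq_prim_root_expr z_prim) mod0n modn_small //.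
  by rewrite -lt0n.
have := subrX1 w n; rewrite /w exprVn (exprAC z t n) (prim_expr_order z_prim).
rewrite expr1n invr1 subrr => /esym/eqP; rewrite mulf_eq0 subr_eq0 (negPf w_neq1).
by move=> /eqP.
Qed.

Lemma prim_root_powz_mod (t : int) : z ^ (t %% n)%Z = z ^ t.
Proof.
rewrite [in RHS](divz_eq t n) (expfzDr ((t %/ n)%Z * n) _ prim_root_neq0).
by rewrite -exprz_exp exprzAC -exprnP prim_expr_order // exp1rz mul1r.
Qed.

End RootsOfUnity.

Section Zn.
Variables (m n : nat).
Hypothesis n_gt1 : (1 < n)%N.

Lemma Zn_val_lt (x : 'Z_n) : (x < n)%N.
Proof. by have := ltn_ord x; rewrite [X in (_ < X)%N -> _]Zp_cast. Qed.

Lemma ffun_Zn_addE (a b : {ffun 'I_m -> 'Z_n}) i :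
  ((a + b)%R i : nat) = ((a i + b i) %% n)%N.
Proof. by rewrite ffunE /=; congr (_ %% _)%N; exact: Zp_cast. Qed.

Lemma epsE (i j : 'I_m) : (eps n j i : nat) = (i == j) :> nat.
Proof.
by rewrite ffunE val_Zp_nat // modn_small //; case: (i == j) => //; exact: ltnW.
Qed.

Lemma sum_Zn (R : nmodType) (F : nat -> R) :
  \sum_(c : 'Z_n) F c = \sum_(c < n) F c.
Proof. by rewrite -[LHS](big_mkord xpredT F) (Zp_cast n_gt1) big_mkord. Qed.

End Zn.

Lemma sum_indicator_uniq (R : pzSemiRingType) (T : eqType) (s : seq T) (v : T) :
  uniq s -> \sum_(c <- s) ((v == c)%:R : R) = (v \in s)%:R.
Proof.
move=> s_uniq; rewrite -(count_uniq_mem v s_uniq) -sum1_count natr_sum [RHS]big_mkcond.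
by apply: eq_bigr => c _; rewrite /= [c == v]eq_sym; case: (v == c).
Qed.


Section HalfSmallQuasiQuantumGroup.
Variables (k : fieldType) (A : algType k).
Variables (m n : nat) (Ca : 'I_m -> 'I_m -> int) (d : 'I_m -> nat) (q : k)
  (l : 'I_m -> nat) (h e : 'I_m -> A).
Hypotheses (n_gt1 : (1 < n)%N) (chark : [pchar k] =i pred0).
Hypotheses (z_prim : n.-primitive_root (q ^+ n)) (rel : qqg_rel n Ca d q l h e).
Local Notation z := (q ^+ n).
Local Notation onei := (onei n q h).
Local Notation idem := (idem q h).

Let n_gt0 : (0 < n)%N. Proof. exact: ltnW. Qed.

Lemma h_onei i c : h i * onei i c = z ^+ c *: onei i c.
Proof.
have [_ h_n _ _ _] := rel.
pose F t := (z ^+ (c * t))^-1 *: h i ^+ t.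
have F_n : F n = F 0%N.
  by rewrite /F h_n muln0 mulnC exprM (prim_expr_order z_prim) expr1n.
have shift : \sum_(t < n) F t.+1 = \sum_(t < n) F t.
  case: n F_n n_gt0 => // N F_N _.
  by rewrite big_ord_recr big_ord_recl /= F_N addrC.
rewrite /onei -scalerAr [RHS]scalerA mulrC -scalerA; congr (_ *: _).
rewrite mulr_sumr -shift scaler_sumr; apply: eq_bigr => t _.
rewrite /F -scalerAr -exprS !scalerA; congr (_ *: _).
rewrite mulnS exprD invfM mulrA divff ?mul1r //.
exact: expf_neq0 (prim_root_neq0 n_gt0 z_prim).
Qed.

Lemma sum_onei i : \sum_(c < n) onei i c = 1.
Proof.
rewrite /onei -scaler_sumr exchange_big /=.
under eq_bigr do rewrite -scaler_suml.
rewrite (bigD1 (Ordinal n_gt0)) //= [X in _ + X]big1 => [|t t_neq0]; last first.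
  rewrite sum_prim_root_powV ?scale0r // ltn_ord andbT lt0n.
  by apply: contra t_neq0 => /eqP t0; apply/eqP/val_inj.
rewrite addr0 expr0; under eq_bigr do rewrite muln0 expr0 invr1.
have nR_neq0 : (n%:R : k) != 0 by move/pcharf0P: chark => ->; rewrite -lt0n.
by rewrite sumr_const card_ord scalerA mulVf // scale1r.
Qed.

Lemma h_onei_comm i j c : h i * onei j c = onei j c * h i.
Proof.
have [h_comm _ _ _ _] := rel.
rewrite /onei -scalerAr -scalerAl mulr_sumr mulr_suml; congr (_ *: _).
apply: eq_bigr => t _; rewrite -scalerAr -scalerAl; congr (_ *: _).
exact: commrX (h_comm i j).
Qed.

Lemma h_idem i (a : {ffun 'I_m -> 'Z_n}) : h i * idem a = z ^+ a i *: idem a.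
Proof.
rewrite /idem; elim: (index_enum _) (mem_index_enum i) => // j r IH.
rewrite big_cons in_cons mulrA => /orP[/eqP <-|i_r]; first by rewrite h_onei scalerAl.
by rewrite h_onei_comm -mulrA IH // scalerAr.
Qed.

Lemma sum_idem : \sum_(a : {ffun 'I_m -> 'Z_n}) idem a = 1.
Proof.
rewrite /idem -(bigA_distr_bigA (fun i (c : 'Z_n) => onei i c)).
by rewrite big1 // => i _; rewrite (sum_Zn n_gt1 (fun c => onei i c)) sum_onei.
Qed.

Variable chi : {ffun 'I_m -> 'Z_n} -> A -> k.
Hypothesis chi_char : is_chi q h e chi.

Lemma chi_lchar a : lchar (chi a). Proof. by case: (chi_char a). Qed.
Lemma chi_lfun a : lfun (chi a). Proof. by case: (chi_char a). Qed.
Lemma chi1 a : chi a 1 = 1. Proof. by case: (chi_char a). Qed.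
Lemma chiM a x y : chi a (x * y) = chi a x * chi a y.
Proof. by case: (chi_char a). Qed.
Lemma chi_h a i : chi a (h i) = z ^+ a i. Proof. by case: (chi_char a). Qed.
Lemma chi_e a i : chi a (e i) = 0. Proof. by case: (chi_char a). Qed.

Lemma chiX a x N : chi a (x ^+ N) = chi a x ^+ N.
Proof. by elim: N => [|N IH]; rewrite ?expr0 ?chi1 // !exprS chiM IH. Qed.

Lemma chi_onei_neq (a : {ffun 'I_m -> 'Z_n}) i c :
  (c < n)%N -> (a i : nat) != c -> chi a (onei i c) = 0.
Proof.
move=> c_ltn a_neq; have := congr1 (chi a) (h_onei i c).
rewrite chiM chi_h [X in _ = X](lfunZ _ _ (chi_lfun a)) => /eqP.
rewrite -subr_eq0 -mulrBl mulf_eq0 subr_eq0 (eq_prim_root_expr z_prim).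
by rewrite !modn_small ?Zn_val_lt // (negPf a_neq) => /eqP.
Qed.

Lemma chi_onei (a : {ffun 'I_m -> 'Z_n}) i c :
  (c < n)%N -> chi a (onei i c) = ((a i : nat) == c)%:R.
Proof.
move=> c_ltn; have [a_c|a_neq] := eqVneq (a i : nat) c; last exact: chi_onei_neq.
have := congr1 (chi a) (sum_onei i).
rewrite chi1 (lfun_sum _ _ (chi_lfun a)) (bigD1 (Ordinal c_ltn)) //= big1 ?addr0 //.
move=> c' c'_neq; apply: chi_onei_neq; rewrite // a_c.
by apply: contra_neq c'_neq => c_c'; apply: val_inj; rewrite /= c_c'.
Qed.

Lemma chi_idem a b : chi a (idem b) = (a == b)%:R.
Proof.
rewrite /idem (lchar_prod _ _ (chi_lchar a)).
under eq_bigr do rewrite chi_onei ?Zn_val_lt //.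
have [->|a_neq] := eqVneq a b; first by rewrite big1 // => i _; rewrite eqxx.
have [i a_i_neq] : exists i, a i != b i.
  apply/existsP; apply: contraNT a_neq => /existsPn a_b.
  by apply/eqP/ffunP => i; apply/eqP/negPn.
by rewrite (bigD1 i) //= (negPf (a_i_neq : (a i : nat) != b i)) mul0r.
Qed.

Hypothesis generated : forall x, gen h e x.
Local Notation mono := (mono h e).

Lemma monoM d1 d2 x y : mono d1 x -> mono d2 y -> mono (d1 + d2) (x * y).
Proof.
move=> mx my; elim: mx => [|i dg x' _ IH|i dg x' _ IH].
- by rewrite mul1r.
- by rewrite -mulrA; constructor.
- by rewrite -mulrA addSn; constructor.
Qed.

Lemma chi_mono_gt0 a dg w : mono dg w -> (0 < dg)%N -> chi a w = 0.
Proof.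
elim=> [//|i dg' x _ IH|i dg' x _ _] dg_gt0; rewrite chiM.
  by rewrite IH // mulr0.
by rewrite chi_e mul0r.
Qed.

Lemma chi0_mono0 dg w : mono dg w -> dg = 0%N -> chi 0 w = 1.
Proof.
elim=> [|i dg' x _ IH|//] dg0; first exact: chi1.
by rewrite chiM IH // chi_h ffunE mul1r.
Qed.

Lemma chi_mono0_neq0 a dg w : mono dg w -> dg = 0%N -> chi a w != 0.
Proof.
elim=> [|i dg' x _ IH|//] dg0; first by rewrite chi1 oner_eq0.
by rewrite chiM chi_h mulf_neq0 ?IH // expf_neq0 // (prim_root_neq0 n_gt0 z_prim).
Qed.

Lemma mono1_decomp dg w : mono dg w -> dg = 1%N ->
  exists u i v, [/\ mono 0 u, mono 0 v & w = u * (e i * v)].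
Proof.
elim=> [//|i dg' x _ IH|i dg' x mx _] dg1.
  have [u [i' [v [mu mv ->]]]] := IH dg1.
  by exists (h i * u), i', v; split => //; [constructor | rewrite mulrA].
case: dg1 => dg'0; subst dg'.
by exists 1, i, x; split => //; [constructor | rewrite mul1r].
Qed.

Lemma e_mono0_comm i dg v : mono dg v -> dg = 0%N ->
  chi (eps n i) v *: (e i * v) = v * e i.
Proof.
have [_ _ h_e _ _] := rel.
elim=> [|i' dg' x _ IH|//] dg0; first by rewrite chi1 scale1r mulr1 mul1r.
rewrite chiM mulrC -scalerA mulrA chi_h epsE // scalerAl -h_e -[in LHS]mulrA scalerAr.
by rewrite IH // mulrA.
Qed.

Lemma mono0_mul_idem a dg x : mono dg x -> dg = 0%N ->
  x * idem a = chi a x *: idem a.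
Proof.
elim=> [|i dg' x' _ IH|//] dg0; first by rewrite mul1r chi1 scale1r.
by rewrite -mulrA IH // -scalerAr h_idem scalerA chiM chi_h mulrC.
Qed.

Lemma mono0_idem_decomp u : mono 0 u -> u = \sum_a chi a u *: idem a.
Proof.
move=> mu; rewrite -{1}[u]mulr1 -sum_idem mulr_sumr.
by apply: eq_bigr => a _; rewrite (mono0_mul_idem a mu).
Qed.

Inductive mono_span : A -> Prop :=
  | mono_span0 : mono_span 0
  | mono_span_mono dg w : mono dg w -> mono_span w
  | mono_spanD (c : k) x y : mono_span x -> mono_span y -> mono_span (c *: x + y).

Lemma mono_spanM x y : mono_span x -> mono_span y -> mono_span (x * y).
Proof.
move=> sx sy; elim: sx => [|dg w mw|c x1 x2 _ I1 _ I2].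
- by rewrite mul0r; constructor.
- elim: sy => [|dg' w' mw'|c y1 y2 _ I1 _ I2].
  + by rewrite mulr0; constructor.
  + exact: mono_span_mono (monoM mw mw').
  + by rewrite mulrDr -scalerAr; constructor.
- by rewrite mulrDl -scalerAl; constructor.
Qed.

Lemma mono_span_all x : mono_span x.
Proof.
elim: (generated x) => [|i|i|x1 y1 _ I1 _ I2|x1 y1 _ I1 _ I2|c x1 _ I].
- by apply: (mono_span_mono (dg := 0%N)); constructor.
- by rewrite -[h i]mulr1; apply: (mono_span_mono (dg := 0%N)); do 2 constructor.
- by rewrite -[e i]mulr1; apply: (mono_span_mono (dg := 1%N)); do 2 constructor.
- by rewrite -[x1]scale1r; constructor.
- exact: mono_spanM.
- by rewrite -[c *: x1]addr0; constructor => //; constructor.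
Qed.

Lemma mono_lin_ind (P : A -> Prop) : P 0 -> (forall dg w, mono dg w -> P w) ->
  (forall c x y, P x -> P y -> P (c *: x + y)) -> forall x, P x.
Proof.
move=> P0 Pmono PD x; elim: (mono_span_all x) => [|dg w mw|c x1 y1 _ I1 _ I2].
- exact: P0.
- exact: Pmono mw.
- exact: PD.
Qed.

Variable Gam : 'I_m -> A -> k.
Hypothesis Gam_dual : is_Gamma n q h e Gam.

Lemma Gam_lfun j : lfun (Gam j). Proof. by case: (Gam_dual j). Qed.
Local Hint Resolve chi_lfun Gam_lfun : core.

Lemma Gam_idem_e j a i : Gam j (idem a * e i) = ((a == eps n j) && (i == j))%:R.
Proof. by case: (Gam_dual j) => _ Gam_basis _; exact: Gam_basis. Qed.

Lemma Gam_mono j dg w : mono dg w -> dg != 1%N -> Gam j w = 0.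
Proof. by case: (Gam_dual j) => _ _ Gam_homog mw; apply: Gam_homog; apply: homogM. Qed.

Lemma Gam_mono0_e j u i : mono 0 u -> Gam j (u * e i) = (i == j)%:R * chi (eps n j) u.
Proof.
move=> mu; rewrite {1}(mono0_idem_decomp mu) mulr_suml lfun_sum //.
under eq_bigr => a _ do rewrite -scalerAl lfunZ // Gam_idem_e.
rewrite (bigD1 (eps n j)) //= eqxx /= big1 ?addr0; first by rewrite mulrC.
by move=> a /negPf ->; rewrite mulr0.
Qed.

Lemma Gam_mono_e_mono j u i v : mono 0 u -> mono 0 v ->
  Gam j (u * (e i * v)) = (i == j)%:R * chi (eps n j) u.
Proof.
move=> mu mv; have cv_neq0 := chi_mono0_neq0 (eps n i) mv (erefl _).
have muv : mono 0 (u * v) := monoM mu mv.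
have -> : e i * v = (chi (eps n i) v)^-1 *: (v * e i).
  by rewrite -(e_mono0_comm i mv) // scalerA mulVf // scale1r.
rewrite -scalerAr lfunZ // mulrA Gam_mono0_e //.
rewrite chiM; case: (eqVneq i j) => [<-|_]; last by rewrite !mul0r mulr0.
by rewrite !mul1r; field.
Qed.

Lemma Gam_mono_der j dx dy x y : mono dx x -> mono dy y ->
  Gam j (x * y) = chi (eps n j) x * Gam j y + Gam j x * chi 0 y.
Proof.
move=> mx my; have mxy := monoM mx my.
have [dx0|dx_neq0] := eqVneq dx 0%N.
  subst dx; rewrite (Gam_mono j mx) // mul0r addr0.
  have [dy1|dy_neq1] := eqVneq dy 1%N; last first.
    by rewrite (Gam_mono j my) // (Gam_mono j mxy) ?add0n // mulr0.
  have [u [i [v [mu mv ->]]]] := mono1_decomp my dy1.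
  have mxu : mono 0 (x * u) := monoM mx mu.
  by rewrite mulrA !Gam_mono_e_mono // chiM mulrCA.
rewrite (chi_mono_gt0 (eps n j) mx) ?lt0n // mul0r add0r.
have [dx1|dx_neq1] := eqVneq dx 1%N; last first.
  by rewrite (Gam_mono j mx) // (Gam_mono j mxy) ?mul0r //; lia.
have [dy0|dy_neq0] := eqVneq dy 0%N; last first.
  by rewrite (chi_mono_gt0 0 my) ?lt0n // mulr0 (Gam_mono j mxy) //; lia.
subst dy; have [u [i [v [mu mv ->]]]] := mono1_decomp mx dx1.
have mvy : mono 0 (v * y) := monoM mv my.
by rewrite -!mulrA !Gam_mono_e_mono // (chi0_mono0 my) // mulr1.
Qed.

Lemma Gam_twisted_der j : twisted_der (chi (eps n j)) (chi 0) (Gam j).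
Proof.
split=> //; apply: mono_lin_ind.
- by move=> y; rewrite mul0r !lfun0 // !mul0r addr0.
- move=> dx x mx; apply: mono_lin_ind.
  + by rewrite mulr0 !lfun0 // !mulr0 addr0.
  + by move=> dy y my; exact: Gam_mono_der mx my.
  + by move=> c y1 y2 I1 I2; rewrite mulrDr -scalerAr !lfunD // !lfunZ // I1 I2; ring.
- by move=> c x1 x2 I1 I2 y; rewrite mulrDl -scalerAl !lfunD // !lfunZ // I1 I2; ring.
Qed.

Variable Delta : A -> seq (A * A).
Hypothesis Delta_coprod : is_coprod n Ca d q h e Delta.

Lemma mmul_chi a b : mmul Delta (chi a) (chi b) =1 chi (a + b).
Proof.
apply: (lchar_eq generated).
- exact: (mmul_lchar Delta_coprod (chi_lchar a) (chi_lchar b)).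
- exact: chi_lchar.
- move=> i; rewrite (mmul_h Delta_coprod) // !chi_h -exprD ffun_Zn_addE //.
  by rewrite prim_expr_mod.
- move=> i; rewrite (mmul_e Delta_coprod) // chi_e mul0r add0r chiM !chi_e !mulr0.
  by rewrite addr0 big1 // => c _; rewrite chiM chi_e !mulr0.
Qed.

Lemma chi_binv a i :
  chi a (binv n Ca d q h i) = \prod_(t < m) q ^ (cmat Ca d i t * (a t : nat)%:Z).
Proof.
rewrite /binv lfun_sum // (bigD1 a) //= lfunZ // chi_idem eqxx mulr1.
rewrite [X in _ + X]big1 ?addr0 // => b b_neq_a.
by rewrite lfunZ // chi_idem eq_sym (negPf b_neq_a) mulr0.
Qed.

Lemma chi_Hinv a i :
  chi a (Hinv n Ca d h i) = \prod_(t < m) z ^ (- (cmat Ca d i t * (a t : nat)%:Z)).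
Proof.
rewrite /Hinv (lchar_prod _ _ (chi_lchar a)); apply: eq_bigr => t _.
rewrite chiX chi_h -exprM exprnP PoszM gez0_abs ?modz_ge0 //; last by rewrite -lt0n.
rewrite mulrC -exprz_exp (prim_root_powz_mod n_gt0 z_prim) exprz_exp.
by rewrite mulNr.
Qed.

Variable j : 'I_m.
Local Notation Gam_chi b := (mmul Delta (chi b) (Gam j)).

Lemma Gam_chi_lfun b : lfun (Gam_chi b).
Proof. exact: (mmul_lfun Delta_coprod (chi_lfun b) (Gam_lfun j)). Qed.
Local Hint Resolve Gam_chi_lfun : core.

Lemma Gam_chi_twisted_der b : twisted_der (chi (b + eps n j)) (chi b) (Gam_chi b).
Proof.
apply: (twisted_der_ext
  (mmul_lchar_der Delta_coprod (chi_lchar b) (Gam_twisted_der j))).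
  exact: mmul_chi.
by move=> x; rewrite mmul_chi addr0.
Qed.

Lemma Gam1 : Gam j 1 = 0.
Proof. by apply: (Gam_mono j (mono1 _ _)). Qed.

Lemma Gam_h i : Gam j (h i) = 0.
Proof. by rewrite -[h i]mulr1; apply: (Gam_mono j (monoH i (mono1 _ _))). Qed.

Lemma Gam_e i : Gam j (e i) = (i == j)%:R.
Proof.
have := Gam_mono_e_mono j i (mono1 h e) (mono1 h e).
by rewrite mul1r mulr1 chi1 mulr1.
Qed.

Lemma Gam_onei_e i c : (c < n)%N ->
  Gam j (onei i c * e i) = ((i == j) && (c == 1%N))%:R.
Proof.
move=> c_ltn; have [_ Gam_der] := Gam_twisted_der j.
rewrite Gam_der chi_e mulr0 addr0 chi_onei // epsE // Gam_e -natrM.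
by case: (i == j); rewrite /= ?muln0 ?muln1 // eq_sym.
Qed.

Lemma Gam_chi1 b : Gam_chi b 1 = 0.
Proof. by rewrite (mmul1 Delta_coprod) // Gam1 mulr0. Qed.

Lemma Gam_chi_h b i : Gam_chi b (h i) = 0.
Proof. by rewrite (mmul_h Delta_coprod) // Gam_h mulr0. Qed.

Lemma mem_iota_1_pred c : (c \in iota 1 n.-1) = (0 < c < n)%N.
Proof. by rewrite mem_iota add1n prednK. Qed.

Lemma Gam_chi_e b i : Gam_chi b (e i) = (i == j)%:R.
Proof.
rewrite (mmul_e Delta_coprod) // chi_e mul0r add0r chi1 Gam_onei_e // andbF mulr0.
rewrite addr0 big_seq (eq_bigr (fun c => ((i == j) && (1%N == c))%:R)); last first.
  move=> c; rewrite mem_iota_1_pred => /andP[_ c_ltn].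
  by rewrite mul1r Gam_onei_e // [c == _]eq_sym.
rewrite -big_seq; case: (i == j); last by rewrite big1.
by rewrite sum_indicator_uniq ?iota_uniq // mem_iota_1_pred n_gt1.
Qed.

Lemma Gam_chi_onei_e b i c : (c < n)%N ->
  Gam_chi b (onei i c * e i) = chi (b + eps n j) (onei i c) * (i == j)%:R.
Proof.
move=> c_ltn; have [_ Gam_chi_der] := Gam_chi_twisted_der b.
by rewrite Gam_chi_der chi_e mulr0 addr0 Gam_chi_e.
Qed.

Hypothesis cmat_sym : forall i i', cmat Ca d i i' = cmat Ca d i' i.

Lemma mmul_chi_Gam_chi a b :
  mmul Delta (chi a) (Gam_chi b) =1 (fun x =>
  (\prod_(i < m)
     z ^ (- (cmat Ca d i j * (a i : nat)%:Z * (((b j : nat) + 1) %/ n)%N%:Z)))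
  * Gam_chi (a + b) x).
Proof.
apply: (twisted_der_eq generated (c1 := chi (a + b + eps n j)) (c2 := chi (a + b))).
- apply: (twisted_der_ext
    (mmul_lchar_der Delta_coprod (chi_lchar a) (Gam_chi_twisted_der b))).
    by move=> x; rewrite mmul_chi addrA.
  exact: mmul_chi.
- exact: twisted_derZ (Gam_chi_twisted_der (a + b)).
- by rewrite (mmul1 Delta_coprod) // !Gam_chi1 !mulr0.
- by move=> i; rewrite (mmul_h Delta_coprod) // !Gam_chi_h !mulr0.
move=> i; rewrite (mmul_e Delta_coprod) // chi_e mul0r add0r chi1 Gam_chi_e.
rewrite Gam_chi_onei_e // chi_onei //.
have [->|i_neq_j] := eqVneq i j; last first.
  rewrite big1_seq ?mulr0 ?add0r // => c /andP[_]; rewrite mem_iota_1_pred.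
  by move=> /andP[_ c_ltn]; rewrite Gam_chi_onei_e // (negPf i_neq_j) !mulr0.
rewrite (eq_big_seq (fun c => (((b + eps n j)%R j : nat) == c)%:R)) => [|c]; last first.
  rewrite mem_iota_1_pred => /andP[_ c_ltn].
  by rewrite mul1r Gam_chi_onei_e // chi_onei // eqxx mulr1.
rewrite sum_indicator_uniq ?iota_uniq // mem_iota_1_pred !mulr1n !mulr1.
rewrite chi_Hinv ffun_Zn_addE // epsE // eqxx addn1 ltn_pmod // andbT.
have [b_lt|b_ge] := ltnP (b j).+1 n.
  rewrite modn_small // divn_small //= mulr0 addr0 big1 // => t _.
  by rewrite mulr0 oppr0 expr0z.
have -> : (b j : nat).+1 = n by have := Zn_val_lt n_gt1 (b j); lia.
rewrite modnn divnn n_gt0 /= mulr1 add0r.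
by apply: eq_bigr => t _; rewrite cmat_sym mulr1.
Qed.

Lemma mmul_Gam_chi_chi a b :
  mmul Delta (Gam_chi b) (chi a) =1 (fun x =>
  (\prod_(i < m) q ^ (cmat Ca d j i * (a i : nat)%:Z)) * Gam_chi (a + b) x).
Proof.
apply: (twisted_der_eq generated (c1 := chi (a + b + eps n j)) (c2 := chi (a + b))).
- apply: (twisted_der_ext
    (mmul_der_lchar Delta_coprod (Gam_chi_twisted_der b) (chi_lchar a))).
    by move=> x; rewrite mmul_chi addrC addrA.
  by move=> x; rewrite mmul_chi addrC.
- exact: twisted_derZ (Gam_chi_twisted_der (a + b)).
- by rewrite (mmul1 Delta_coprod) // !Gam_chi1 mul0r mulr0.
- by move=> i; rewrite (mmul_h Delta_coprod) // !Gam_chi_h mul0r mulr0.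
move=> i; rewrite (mmul_e Delta_coprod) // Gam_chi1 chiM chi_e !mulr0 addr0.
rewrite big1 ?addr0 => [|c _]; last by rewrite mul0r.
rewrite !Gam_chi_e chi_binv; have [<-|_] := eqVneq i j; last by rewrite mul0r mulr0.
by rewrite mul1r mulr1.
Qed.

End HalfSmallQuasiQuantumGroup.

Theorem lemma3p2 (k : closedFieldType) (chark : [pchar k] =i pred0)
  (m n : nat) (Ca : 'I_m -> 'I_m -> int) (d : 'I_m -> nat) (q : k)
  (l : 'I_m -> nat)
  (A : algType k) (h e : 'I_m -> A) (Delta : A -> seq (A * A))
  (chi : {ffun 'I_m -> 'Z_n} -> A -> k) (Gam : 'I_m -> A -> k) :
  finite_cartan Ca d ->
  (1 < n)%N ->
  (n ^ 2)%N.-primitive_root q ->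
  (forall i, (l i).-primitive_root (q ^ cmat Ca d i i)) ->
  is_Aq n Ca d q l h e ->
  is_coprod n Ca d q h e Delta ->
  is_chi q h e chi ->
  is_Gamma n q h e Gam ->
  forall (j : 'I_m) (a b : {ffun 'I_m -> 'Z_n}),
    (forall x y,
       mmul Delta (chi a) (Gam j) (x * y) =
         chi (a + eps n j) x * mmul Delta (chi a) (Gam j) y
         + mmul Delta (chi a) (Gam j) x * chi a y)
    /\
    (forall x,
       mmul Delta (chi a) (mmul Delta (chi b) (Gam j)) x =
         (\prod_(i < m) (q ^+ n) ^ (- (cmat Ca d i j * (a i : nat)%:Z
                                        * (((b j : nat) + 1) %/ n)%N%:Z)))
         * mmul Delta (chi (a + b)) (Gam j) x)
    /\
    (forall x,
       mmul Delta (mmul Delta (chi b) (Gam j)) (chi a) x =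
         (\prod_(i < m) q ^ (cmat Ca d j i * (a i : nat)%:Z))
         * mmul Delta (chi (a + b)) (Gam j) x).
Proof.
move=> [_ _ _ cmat_sym _] n_gt1 q_prim _ [rel generated _] Delta_coprod chi_char
  Gam_dual j a b.
have z_prim : n.-primitive_root (q ^+ n).
  have := dvdn_prim_root q_prim (dvdn_exp2l n (isT : (1 <= 2)%N)).
  by rewrite expn1 expnS expn1 mulnK // ltnW.
split; first exact: (Gam_chi_twisted_der n_gt1 chark z_prim rel chi_char generated
  Gam_dual Delta_coprod j a).2.
split.
  exact: (mmul_chi_Gam_chi n_gt1 chark z_prim rel chi_char generated Gam_dual
    Delta_coprod j cmat_sym).
exact: (mmul_Gam_chi_chi n_gt1 chark z_prim rel chi_char generated Gam_dual
  Delta_coprod j).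
Qed.
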